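(* Consider the generative logic with $\mu\to 1$ in the setting below. Let $\Omega$ and $\Delta$ be finite multisets of time-indexed formulas such that $E'(\Delta)\neq\emptyset$. Then $$p(\Omega\mid\Delta)=\frac{|E(\Omega)\cap E'(\Delta)|}{|E'(\Delta)|}.$$
   Context: Let $\mathcal{L}$ be a propositional language and let $K,T\ge1$. There are data sequences $d_1,\dots,d_K$; repetitions are allowed, and data are identified by their index $k$. Each $d_k$ is associated with a sequence of models $m(d_k)=(m(d_k)^1,\dots,m(d_k)^T)$ of $\mathcal{L}$. The prior is $p(d_k)=1/K$. A time-indexed formula is written $\alpha^t$, with $\alpha\in\mathcal{L}$ and $1\le t\le T$. Write $[\![\alpha^t]\!]_k=1$ if $\alpha$ is true in $m(d_k)^t$, and $0$ otherwise. For $\mu\in(0,1)$ and a finite multiset $X$ of time-indexed formulas, define $$p(X\mid d_k,\mu)=\prod_{\alpha^t\in X}\mu^{[\![\alpha^t]\!]_k}(1-\mu)^{1-[\![\alpha^t]\!]_k}.$$ Then define $$p(\Omega\mid\Delta)=\lim_{\mu\to1}\frac{\sum_k p(\Omega\mid d_k,\mu)\,p(\Delta\mid d_k,\mu)\,p(d_k)}{\sum_k p(\Delta\mid d_k,\mu)\,p(d_k)}.$$ An index $k$ is an evidence of $X$ if $[\![\alpha^t]\!]_k=1$ for all $\alpha^t\in X$. Let $E(X)$ be the set of such indices. $X$ is called founded if $E(X)\neq\emptyset$. Let $MFS(\Delta)$ be the set of nonempty founded sub-multisets $S\subseteq\Delta$ that have maximum cardinality among all nonempty founded sub-multisets of $\Delta$.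 Set $E'(\Delta)=\bigcup_{S\in MFS(\Delta)}E(S)$. This union is empty if $MFS(\Delta)=\emptyset$. Cardinalities $|\cdot|$ count indices. *)

From HB Require Import structures.
From mathcomp Require Import all_boot all_order all_algebra.
From mathcomp Require Import all_classical all_reals all_analysis.
Set Implicit Arguments. Unset Strict Implicit. Unset Printing Implicit Defensive.
Import Order.TTheory GRing.Theory Num.Theory.
Local Open Scope ring_scope.

Inductive form (A : Type) : Type :=
  | FTop : form A
  | FBot : form A
  | FAtom : A -> form A
  | FNeg : form A -> form A
  | FAnd : form A -> form A -> form A
  | FOr : form A -> form A -> form A
  | FImp : form A -> form A -> form A.

Fixpoint eval (A : Type) (v : A -> bool) (f : form A) : bool :=
  match f with
  | FTop => true
  | FBot => false
  | FAtom a => v a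
  | FNeg g => ~~ eval v g
  | FAnd g h => eval v g && eval v h
  | FOr g h => eval v g || eval v h
  | FImp g h => eval v g ==> eval v h
  end.

(* Time-indexed formula alpha^t; times 1..T are represented by 'I_T (0-based). *)
Definition tform (A : Type) (T : nat) : Type := (form A * 'I_T)%type.

(* Data d_1..d_K are indices 'I_K; m k t is the model m(d_k)^t.
   [[alpha^t]]_k : *)
Definition sem (A : Type) (K T : nat) (m : 'I_K -> 'I_T -> A -> bool)
  (k : 'I_K) (x : tform A T) : bool := eval (m k x.2) x.1.

(* Finite multisets of time-indexed formulas are sequences (order irrelevant). *)

Definition pX (R : realType) (A : Type) (K T : nat) (m : 'I_K -> 'I_T -> A -> bool)
  (X : seq (tform A T)) (k : 'I_K) (mu : R) : R :=
  \prod_(x <- X) (if sem m k x then mu else 1 - mu).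

(* The ratio whose limit as mu -> 1 defines p(Omega | Delta); prior p(d_k) = 1/K. *)
Definition pcond_ratio (R : realType) (A : Type) (K T : nat)
  (m : 'I_K -> 'I_T -> A -> bool) (Om De : seq (tform A T)) (mu : R) : R :=
  (\sum_(k < K) pX m Om k mu * pX m De k mu * K%:R^-1) /
  (\sum_(k < K) pX m De k mu * K%:R^-1).

Definition Ev (A : Type) (K T : nat) (m : 'I_K -> 'I_T -> A -> bool)
  (X : seq (tform A T)) : {set 'I_K} :=
  [set k | all (sem m k) X].

Definition founded (A : Type) (K T : nat) (m : 'I_K -> 'I_T -> A -> bool)
  (X : seq (tform A T)) : bool := Ev m X != finset.set0.

(* Sub-multisets of De are exactly (up to order) the masks of De. *)
Definition is_MFS (A : Type) (K T : nat) (m : 'I_K -> 'I_T -> A -> bool)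
  (De : seq (tform A T)) (b : (size De).-tuple bool) : bool :=
  [&& (0 < size (mask b De))%N, founded m (mask b De) &
      [forall b' : (size De).-tuple bool,
         (0 < size (mask b' De))%N && founded m (mask b' De) ==>
         (size (mask b' De) <= size (mask b De))%N]].

Definition Ev' (A : Type) (K T : nat) (m : 'I_K -> 'I_T -> A -> bool)
  (De : seq (tform A T)) : {set 'I_K} :=
  \bigcup_(b : (size De).-tuple bool | @is_MFS A K T m De b) Ev m (mask b De).

(* A datum k satisfying c_k of the formulas of Delta has likelihood
   p(Delta | d_k, mu) = mu^c_k (1 - mu)^(|Delta| - c_k).  A sub-multiset of Delta
   with evidence k has at most c_k elements, and the formulas satisfied by k
   form one with exactly c_k, so E'(Delta), when nonempty, is the set of data
   maximising c_k.  Dividing numerator and denominator by (1 - mu)^(|Delta| - max c) leaves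
   weights tending to 1 on E'(Delta) and to 0 elsewhere, while p(Omega | d_k, mu)
   tends to the indicator of E(Omega). *)

From HB Require Import structures.
From mathcomp Require Import all_boot all_order all_algebra.
From mathcomp Require Import all_classical all_reals all_analysis.
Set Implicit Arguments. Unset Strict Implicit.
Import Order.TTheory GRing.Theory Num.Theory numFieldNormedType.Exports.
Local Open Scope ring_scope.

Section MaximalFoundedSubsets.
Variables (A : Type) (K T : nat) (m : 'I_K -> 'I_T -> A -> bool).
Variable De : seq (tform A T).

Definition sat_count (k : 'I_K) : nat := count (sem m k) De.

Definition sat_mask (k : 'I_K) : (size De).-tuple bool :=
  @Tuple _ _ (map (sem m k) De) (introT eqP (size_map _ _)).

Lemma mask_sat_mask k : mask (sat_mask k) De = seq.filter (sem m k) De.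
Proof. by rewrite filter_mask. Qed.

Lemma size_mask_sat_mask k : size (mask (sat_mask k) De) = sat_count k.
Proof. by rewrite mask_sat_mask size_filter. Qed.

Lemma Ev_sat_mask k : k \in Ev m (mask (sat_mask k) De).
Proof. by rewrite inE mask_sat_mask filter_all. Qed.

Lemma founded_sat_mask k : founded m (mask (sat_mask k) De).
Proof. by apply/set0Pn; exists k; apply: Ev_sat_mask. Qed.

Lemma size_mask_le_sat_count (b : (size De).-tuple bool) k :
  k \in Ev m (mask b De) -> (size (mask b De) <= sat_count k)%N.
Proof. by rewrite inE all_count => /eqP <-; apply: leq_count_mask. Qed.

Lemma Ev'_sat_count_max k :
  k \in Ev' m De -> forall j, (sat_count j <= sat_count k)%N.
Proof.
case/bigcupP=> b /and3P[_ _ /forallP b_max] kb j.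
have [->//|j_gt0] := posnP (sat_count j).
have := b_max (sat_mask j).
rewrite size_mask_sat_mask j_gt0 founded_sat_mask => /implyP/(_ isT) jb.
exact: leq_trans jb (size_mask_le_sat_count kb).
Qed.

Lemma Ev'_sat_count_gt0 k : k \in Ev' m De -> (0 < sat_count k)%N.
Proof.
case/bigcupP=> b /and3P[b_gt0 _ _] kb.
exact: leq_trans b_gt0 (size_mask_le_sat_count kb).
Qed.

Lemma Ev'_argmax k0 :
  k0 \in Ev' m De -> Ev' m De = [set k | sat_count k == sat_count k0].
Proof.
move=> k0E'; apply/setP=> k; rewrite inE; apply/idP/eqP=> [kE'|k_max].
  by apply/eqP; rewrite eqn_leq !Ev'_sat_count_max.
apply/bigcupP; exists (sat_mask k); last exact: Ev_sat_mask.
apply/and3P; split; first by rewrite size_mask_sat_mask k_max Ev'_sat_count_gt0.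
  exact: founded_sat_mask.
apply/forallP=> b; apply/implyP=> /andP[_ /set0Pn[j jb]].
rewrite size_mask_sat_mask k_max.
exact: leq_trans (size_mask_le_sat_count jb) (Ev'_sat_count_max k0E' j).
Qed.

End MaximalFoundedSubsets.

Lemma prod_if_count (R : comPzSemiRingType) (X : Type) (s : seq X) (P : pred X)
    (a b : R) :
  \prod_(x <- s) (if P x then a else b) = a ^+ count P s * b ^+ count (predC P) s.
Proof.
elim: s => [|x s IHs]; first by rewrite big_nil mulr1.
rewrite big_cons IHs /=; case: (P x); rewrite /= ?add0n !exprS.
  by rewrite mulrA.
by rewrite mulrCA.
Qed.

Section BernoulliWeights.
Variable R : realType.

Definition bern_weight (n e : nat) (mu : R) : R := mu ^+ e * (1 - mu) ^+ (n - e).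

Lemma bern_weight_split n M e mu : (e <= M <= n)%N ->
  bern_weight n e mu = (1 - mu) ^+ (n - M) * bern_weight M e mu.
Proof.
case/andP=> eM Mn; rewrite /bern_weight mulrCA -exprD.
by rewrite addnBA // subnK.
Qed.

Lemma bern_weight1 n e : bern_weight n e 1 = (n <= e)%:R.
Proof. by rewrite /bern_weight expr1n mul1r subrr expr0n subn_eq0. Qed.

Lemma continuous_bern_weight n e : continuous (bern_weight n e).
Proof.
have -> : bern_weight n e = horner ('X^e * (1 - 'X) ^+ (n - e)).
  by apply/funext=> mu; rewrite !hornerE.
exact: continuous_horner.
Qed.

Lemma sum_bern_weight_split (I : finType) (g : I -> R) (e : I -> nat) n M mu :
  (forall i, e i <= M)%N -> (M <= n)%N ->
  \sum_i g i * bern_weight n (e i) mu =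
    (1 - mu) ^+ (n - M) * \sum_i g i * bern_weight M (e i) mu.
Proof.
move=> e_le M_le; rewrite mulr_sumr; apply: eq_bigr => i _.
by rewrite (@bern_weight_split _ M) ?e_le // mulrCA.
Qed.

End BernoulliWeights.

Section Likelihood.
Variables (R : realType) (A : Type) (K T : nat) (m : 'I_K -> 'I_T -> A -> bool).

Lemma pX_bern_weight (X : seq (tform A T)) k (mu : R) :
  pX m X k mu = bern_weight (size X) (sat_count m X k) mu.
Proof.
by rewrite /pX prod_if_count /bern_weight -(count_predC (sem m k) X) addKn.
Qed.

Lemma pX1 (X : seq (tform A T)) k : pX m X k (1 : R) = (k \in Ev m X)%:R.
Proof.
by rewrite pX_bern_weight bern_weight1 inE all_count eqn_leq count_size.
Qed.

Lemma continuous_pX (X : seq (tform A T)) k : continuous (pX m X k : R -> R).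
Proof.
have -> : pX m X k = bern_weight (R := R) (size X) (sat_count m X k).
  by apply/funext => mu; rewrite pX_bern_weight.
exact: continuous_bern_weight.
Qed.

Lemma pcond_ratioE (Om De : seq (tform A T)) (mu : R) : (0 < K)%N ->
  pcond_ratio m Om De mu =
    (\sum_k pX m Om k mu * bern_weight (size De) (sat_count m De k) mu) /
    (\sum_k bern_weight (size De) (sat_count m De k) mu).
Proof.
move=> K_gt0; rewrite /pcond_ratio -!mulr_suml -mulf_div divff ?mulr1.
  by congr (_ * _^-1); apply: eq_bigr => k _; rewrite (pX_bern_weight De).
by rewrite invr_eq0 pnatr_eq0 -lt0n.
Qed.

Lemma sum_pX1 (P : pred 'I_K) (X : seq (tform A T)) :
  \sum_(k | P k) pX m X k (1 : R) = #|Ev m X :&: [set k | P k]|%:R.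
Proof.
rewrite -sumr_const big_mkcond [RHS]big_mkcond; apply: eq_bigr => k _.
by rewrite pX1 !inE; case: (all _ _); case: (P k).
Qed.

End Likelihood.

Local Open Scope classical_set_scope.

Lemma cvg_bern_weighted_mean (R : realType) (I : finType) (f : I -> R -> R)
    (e : I -> nat) n M :
  (forall i, f i x @[x --> (1 : R)^'-] --> f i 1) ->
  (forall i, e i <= M)%N -> (M <= n)%N -> (exists i, e i = M) ->
  (\sum_i f i mu * bern_weight n (e i) mu) / (\sum_i bern_weight n (e i) mu)
    @[mu --> (1 : R)^'-] -->
  (\sum_(i | e i == M) f i 1) / (\sum_(i | e i == M) 1).
Proof.
move=> f_cvg e_le M_le [i0 ei0].
have sum_argmax (g : I -> R) :
    \sum_(i | e i == M) g i = \sum_i g i * bern_weight M (e i) 1.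
  rewrite big_mkcond; apply: eq_bigr => i _.
  rewrite bern_weight1 eqn_leq e_le.
  by case: (M <= e i)%N; rewrite ?mulr1 ?mulr0.
rewrite !sum_argmax.
apply: (@cvg_trans _ ((fun mu => (\sum_i f i mu * bern_weight M (e i) mu) /
                                 \sum_i 1 * bern_weight M (e i) mu) @ (1 : R)^'-)).
  apply: near_eq_cvg; near=> mu.
  have mu_neq1 : mu != 1 by near: mu; exact: nbhs_left_neq.
  under [X in _ = _ / X]eq_bigr do rewrite -[bern_weight n _ _]mul1r.
  rewrite /= !(sum_bern_weight_split _ _ e_le M_le) -mulf_div divff ?mul1r //.
  by rewrite expf_neq0 // subr_eq0 eq_sym.
have sum_cvg (g : I -> R -> R) :
    (forall i, g i x @[x --> (1 : R)^'-] --> g i 1) ->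
    \sum_i g i x * bern_weight M (e i) x @[x --> (1 : R)^'-] -->
    \sum_i g i 1 * bern_weight M (e i) 1.
  move=> g_cvg; apply: cvg_big => [|i _]; first exact: add_continuous.
  apply: cvgM; first exact: g_cvg.
  exact: cvg_at_left_filter (@continuous_bern_weight R M (e i) 1).
apply: cvgM; first exact: sum_cvg.
apply: cvgV; last exact: (sum_cvg (fun _ _ => 1)) (fun _ => cvg_cst _).
rewrite -sum_argmax sumr_const pnatr_eq0 -lt0n.
by apply/card_gt0P; exists i0; apply/eqP.
Unshelve. all: by end_near.
Qed.

Theorem theorem1 (R : realType) (A : Type) (K T : nat)
  (hK : (1 <= K)%N) (hT : (1 <= T)%N)
  (m : 'I_K -> 'I_T -> A -> bool) (Om De : seq (tform A T)) :
  Ev' m De != finset.set0 ->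
  pcond_ratio m Om De mu @[mu --> (1 : R)^'-] -->
    ((#|Ev m Om :&: Ev' m De|%:R : R) / #|Ev' m De|%:R).
Proof.
case/set0Pn=> k0 k0E'.
have -> : (#|Ev m Om :&: Ev' m De|%:R : R) / #|Ev' m De|%:R =
    (\sum_(k | sat_count m De k == sat_count m De k0) pX m Om k 1) /
    (\sum_(k | sat_count m De k == sat_count m De k0) 1).
  rewrite (Ev'_argmax k0E') sum_pX1 sumr_const.
  by congr (_ / _%:R); apply: eq_card => k; rewrite inE.
rewrite (eq_cvg _ _ (pcond_ratioE m Om De ^~ hK)).
apply: cvg_bern_weighted_mean => [k | k | | ].
- exact: cvg_at_left_filter (@continuous_pX R A K T m Om k 1).
- exact: Ev'_sat_count_max.
- exact: count_size.
- by exists k0.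
Qed.
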